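(* Let $\{D_1,\ldots,D_n\}$ be a program (a finite set of $D$-formulas) and let $G$ be a goal ($G$-formula), in the language and operational semantics described in the context. Then $ex(\{D_1,\ldots,D_n\},G)$ terminates with a success if and only if $G$ follows from $\{!D_1,\ldots,!D_n\}$ in intuitionistic affine logic (intuitionistic linear logic together with the weakening rule).
   Context: Formulas are first-order, built over atomic formulas $A$. Goals ($G$-formulas) and modules ($D$-formulas) are given by the grammar $G ::= A \mid G\land G \mid D \Rightarrow G \mid \exists x\, G$, $D ::= A \mid G\supset D \mid \forall x\, D \mid D \sqcap D \mid D\land D$. A program $\mathcal{P}$ is a set of $D$-formulas. The connective $\sqcap$ is the choice-conjunction (additive conjunction $\&$) of linear logic. When read as formulas of intuitionistic affine logic, $D \Rightarrow G$ means that $D$ is added as a reusable clause for solving $G$ (i.e. $!D \multimap G$), $G\supset D$ is implication from the goal $G$ to $D$, and $!D$ marks $D$ as a reusable clause. Execution $ex(\mathcal{P},G)$ and backchaining $bchain(D,\mathcal{P},A)$ are defined by the rules: (1) $bchain(A,\mathcal{P},A)$ holds (success); (2) $bchain(G_1\supset D,\mathcal{P},A)$ if $ex(\mathcal{P},G_1)$ and $bchain(D,\mathcal{P},A)$; (3) $bchain(\forall x\,D,\mathcal{P},A)$ if $bchain([t/x]D,\mathcal{P},A)$ for some term $t$; (4) $bchain(D_0\land D_1,\mathcal{P},A)$ if $bchain(D_0,\mathcal{P},A)$; (5) $bchain(D_0\land D_1,\mathcal{P},A)$ if $bchain(D_1,\mathcal{P},A)$; (6) $bchain(D_0\sqcap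 D_1,\mathcal{P},A)$ if one chooses a successful one between $bchain(D_0,\mathcal{P},A)$ and $bchain(D_1,\mathcal{P},A)$ (the unchosen one is discarded); (7) $ex(\mathcal{P},A)$ if $D\in\mathcal{P}$ and $bchain(D,\mathcal{P},A)$; (8) $ex(\mathcal{P},G_1\land G_2)$ if $ex(\mathcal{P},G_1)$ and $ex(\mathcal{P},G_2)$; (9) $ex(\mathcal{P},\exists x\,G_1)$ if $ex(\mathcal{P},[t/x]G_1)$ for some term $t$; (10) $ex(\mathcal{P},D\Rightarrow G_1)$ if $ex(\{D\}\cup\mathcal{P},G_1)$. *)

(* First-order syntax in locally nameless style:
   bound variables are de Bruijn indices (BVar), free variables are names (FVar). *)
From Stdlib Require Import List Arith Bool Permutation.
Import ListNotations.

Inductive term : Type :=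
| BVar : nat -> term
| FVar : nat -> term
| Fn   : nat -> list term -> term.

Fixpoint topen (k : nat) (u : term) (t : term) : term :=
  match t with
  | BVar i => if Nat.eqb i k then u else BVar i
  | FVar x => FVar x
  | Fn f l => Fn f (map (topen k u) l)
  end.

Fixpoint tlc_at (n : nat) (t : term) : bool :=
  match t with
  | BVar i => Nat.ltb i n
  | FVar _ => true
  | Fn _ l => forallb (tlc_at n) l
  end.

Definition term_lc (t : term) : Prop := tlc_at 0 t = true.

Fixpoint tfv (x : nat) (t : term) : bool :=
  match t with
  | BVar _ => false
  | FVar y => Nat.eqb x y
  | Fn _ l => existsb (tfv x) l
  end.

(** * Goals (G-formulas) and modules (D-formulas) *)
Inductive goal : Type :=
| GAtom : nat -> list term -> goal
| GAnd  : goal -> goal -> goal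
| GAug  : prog -> goal -> goal
| GEx   : goal -> goal
with prog : Type :=
| DAtom : nat -> list term -> prog
| DImp  : goal -> prog -> prog
| DAll  : prog -> prog
| DChoice : prog -> prog -> prog
| DAnd  : prog -> prog -> prog.

Fixpoint gopen (k : nat) (u : term) (G : goal) : goal :=
  match G with
  | GAtom p l => GAtom p (map (topen k u) l)
  | GAnd G1 G2 => GAnd (gopen k u G1) (gopen k u G2)
  | GAug D G1 => GAug (dopen k u D) (gopen k u G1)
  | GEx G1 => GEx (gopen (S k) u G1)
  end
with dopen (k : nat) (u : term) (D : prog) : prog :=
  match D with
  | DAtom p l => DAtom p (map (topen k u) l)
  | DImp G1 D1 => DImp (gopen k u G1) (dopen k u D1)
  | DAll D1 => DAll (dopen (S k) u D1)
  | DChoice D1 D2 => DChoice (dopen k u D1) (dopen k u D2)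
  | DAnd D1 D2 => DAnd (dopen k u D1) (dopen k u D2)
  end.

Fixpoint glc_at (n : nat) (G : goal) : bool :=
  match G with
  | GAtom _ l => forallb (tlc_at n) l
  | GAnd G1 G2 => glc_at n G1 && glc_at n G2
  | GAug D G1 => dlc_at n D && glc_at n G1
  | GEx G1 => glc_at (S n) G1
  end
with dlc_at (n : nat) (D : prog) : bool :=
  match D with
  | DAtom _ l => forallb (tlc_at n) l
  | DImp G1 D1 => glc_at n G1 && dlc_at n D1
  | DAll D1 => dlc_at (S n) D1
  | DChoice D1 D2 => dlc_at n D1 && dlc_at n D2
  | DAnd D1 D2 => dlc_at n D1 && dlc_at n D2
  end.

Definition goal_lc (G : goal) : Prop := glc_at 0 G = true.
Definition prog_lc (D : prog) : Prop := dlc_at 0 D = true.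

Inductive ex : list prog -> goal -> Prop :=
| ex_atom : forall P D p l, In D P -> bchain D P p l -> ex P (GAtom p l)
| ex_and  : forall P G1 G2, ex P G1 -> ex P G2 -> ex P (GAnd G1 G2)
| ex_ex   : forall P G1 t, term_lc t -> ex P (gopen 0 t G1) -> ex P (GEx G1)
| ex_aug  : forall P D G1, ex (D :: P) G1 -> ex P (GAug D G1)
with bchain : prog -> list prog -> nat -> list term -> Prop :=
| bc_atom : forall P p l, bchain (DAtom p l) P p l
| bc_imp  : forall P G1 D p l, ex P G1 -> bchain D P p l -> bchain (DImp G1 D) P p l
| bc_all  : forall P D t p l, term_lc t -> bchain (dopen 0 t D) P p l ->
              bchain (DAll D) P p l
| bc_and1 : forall P D0 D1 p l, bchain D0 P p l -> bchain (DAnd D0 D1) P p l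
| bc_and2 : forall P D0 D1 p l, bchain D1 P p l -> bchain (DAnd D0 D1) P p l
| bc_ch1  : forall P D0 D1 p l, bchain D0 P p l -> bchain (DChoice D0 D1) P p l
| bc_ch2  : forall P D0 D1 p l, bchain D1 P p l -> bchain (DChoice D0 D1) P p l.

(** * Intuitionistic affine logic (first-order, cut-free sequent calculus) *)
Inductive formula : Type :=
| FAtom   : nat -> list term -> formula
| Tensor  : formula -> formula -> formula
| With    : formula -> formula -> formula
| Lolli   : formula -> formula -> formula
| Bang    : formula -> formula
| FAll    : formula -> formula
| FEx     : formula -> formula.

Fixpoint fopen (k : nat) (u : term) (A : formula) : formula :=
  match A with
  | FAtom p l => FAtom p (map (topen k u) l)
  | Tensor A B => Tensor (fopen k u A) (fopen k u B)
  | With A B => With (fopen k u A) (fopen k u B)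
  | Lolli A B => Lolli (fopen k u A) (fopen k u B)
  | Bang A => Bang (fopen k u A)
  | FAll A => FAll (fopen (S k) u A)
  | FEx A => FEx (fopen (S k) u A)
  end.

Fixpoint ffv (x : nat) (A : formula) : bool :=
  match A with
  | FAtom _ l => existsb (tfv x) l
  | Tensor A B | With A B | Lolli A B => ffv x A || ffv x B
  | Bang A | FAll A | FEx A => ffv x A
  end.

Definition fresh_ctx (x : nat) (Γ : list formula) : Prop :=
  forall A, In A Γ -> ffv x A = false.

Reserved Notation "Γ ⊢ C" (at level 70).
Inductive prov : list formula -> formula -> Prop :=
| r_id    : forall A, [A] ⊢ A
| r_exch  : forall Γ Δ C, Permutation Γ Δ -> Γ ⊢ C -> Δ ⊢ C
| r_weak  : forall Γ A C, Γ ⊢ C -> A :: Γ ⊢ C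
| r_contr : forall Γ A C, Bang A :: Bang A :: Γ ⊢ C -> Bang A :: Γ ⊢ C
| r_der   : forall Γ A C, A :: Γ ⊢ C -> Bang A :: Γ ⊢ C
| r_prom  : forall Γ A, map Bang Γ ⊢ A -> map Bang Γ ⊢ Bang A
| r_tensL : forall Γ A B C, A :: B :: Γ ⊢ C -> Tensor A B :: Γ ⊢ C
| r_tensR : forall Γ Δ A B, Γ ⊢ A -> Δ ⊢ B -> Γ ++ Δ ⊢ Tensor A B
| r_withL1 : forall Γ A B C, A :: Γ ⊢ C -> With A B :: Γ ⊢ C
| r_withL2 : forall Γ A B C, B :: Γ ⊢ C -> With A B :: Γ ⊢ C
| r_withR : forall Γ A B, Γ ⊢ A -> Γ ⊢ B -> Γ ⊢ With A B
| r_lolliL : forall Γ Δ A B C, Γ ⊢ A -> B :: Δ ⊢ C -> Lolli A B :: Γ ++ Δ ⊢ C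
| r_lolliR : forall Γ A B, A :: Γ ⊢ B -> Γ ⊢ Lolli A B
| r_allL  : forall Γ A C t, term_lc t -> fopen 0 t A :: Γ ⊢ C -> FAll A :: Γ ⊢ C
| r_allR  : forall Γ A x, fresh_ctx x Γ -> ffv x A = false ->
              Γ ⊢ fopen 0 (FVar x) A -> Γ ⊢ FAll A
| r_exL   : forall Γ A C x, fresh_ctx x Γ -> ffv x A = false -> ffv x C = false ->
              fopen 0 (FVar x) A :: Γ ⊢ C -> FEx A :: Γ ⊢ C
| r_exR   : forall Γ A t, term_lc t -> Γ ⊢ fopen 0 t A -> Γ ⊢ FEx A
where "Γ ⊢ C" := (prov Γ C).

Fixpoint gtr (G : goal) : formula :=
  match G with
  | GAtom p l => FAtom p l
  | GAnd G1 G2 => Tensor (gtr G1) (gtr G2)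
  | GAug D G1 => Lolli (Bang (dtr D)) (gtr G1)
  | GEx G1 => FEx (gtr G1)
  end
with dtr (D : prog) : formula :=
  match D with
  | DAtom p l => FAtom p l
  | DImp G1 D1 => Lolli (gtr G1) (dtr D1)
  | DAll D1 => FAll (dtr D1)
  | DChoice D1 D2 => With (dtr D1) (dtr D2)
  | DAnd D1 D2 => Tensor (dtr D1) (dtr D2)
  end.

(* Soundness: each rule of ex and bchain is mirrored by a short derivation in
   which the reusable clauses !D are duplicated by contraction whenever a
   derivation branches.
   Completeness: by induction on a cut-free derivation of Γ ⊢ gtr G, keeping the
   invariant that every hypothesis is (possibly under !) the translation of a
   clause D that "resolves" in P, i.e. every backchaining success of D in an
   extension of P yields a success of the atomic goal.  Because goals and clauses
   are translated into disjoint shapes of formulas, every left rule acts on such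
   a hypothesis and turns it into hypotheses obeying the invariant, and every
   right rule is one of the rules of ex. *)
From Stdlib Require Import List Permutation.
Import ListNotations.

Scheme goal_ind2 := Induction for goal Sort Prop
with prog_ind2 := Induction for prog Sort Prop.
Combined Scheme goal_prog_ind from goal_ind2, prog_ind2.

Scheme ex_ind2 := Induction for ex Sort Prop
with bchain_ind2 := Induction for bchain Sort Prop.
Combined Scheme ex_bchain_ind from ex_ind2, bchain_ind2.

Lemma gtr_dtr_open :
  (forall G k u, gtr (gopen k u G) = fopen k u (gtr G)) /\
  (forall D k u, dtr (dopen k u D) = fopen k u (dtr D)).
Proof. apply goal_prog_ind; intros; simpl; congruence. Qed.

Lemma ex_bchain_incl :
  (forall P G, ex P G -> forall P', incl P P' -> ex P' G) /\
  (forall D P p l, bchain D P p l -> forall P', incl P P' -> bchain D P' p l).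
Proof.
  apply ex_bchain_ind; intros; eauto using ex, bchain.
  constructor. apply H. apply incl_cons; [now left | now apply incl_tl].
Qed.

Definition bang_prog (P : list prog) : list formula :=
  map (fun D => Bang (dtr D)) P.

Lemma prov_weaken_app Δ Γ C : Γ ⊢ C -> Δ ++ Γ ⊢ C.
Proof. induction Δ; simpl; auto using r_weak. Qed.

Lemma prov_contract_bangs L Γ C :
  map Bang L ++ map Bang L ++ Γ ⊢ C -> map Bang L ++ Γ ⊢ C.
Proof.
  revert Γ. induction L as [|A L IHL]; simpl; intros Γ H; auto.
  apply (r_exch (map Bang L ++ Bang A :: Γ)); [apply Permutation_sym, Permutation_middle|].
  apply IHL, (r_exch (Bang A :: map Bang L ++ map Bang L ++ Γ)).
  { rewrite !app_assoc. apply Permutation_middle. }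
  apply r_contr, (r_exch _ _ _ (perm_skip _ (Permutation_sym (Permutation_middle _ _ _)))), H.
Qed.

Lemma prov_contract_bang_prog P Γ C :
  bang_prog P ++ bang_prog P ++ Γ ⊢ C -> bang_prog P ++ Γ ⊢ C.
Proof. unfold bang_prog. rewrite <- (map_map dtr Bang). apply prov_contract_bangs. Qed.

Lemma prov_bang_prog_select P D C :
  In D P -> dtr D :: bang_prog P ⊢ C -> bang_prog P ⊢ C.
Proof.
  intros HD H. apply in_split in HD as [P1 [P2 ->]].
  unfold bang_prog in *. rewrite map_app in *. simpl in *.
  eapply r_exch; [apply Permutation_middle|].
  apply r_contr, r_der.
  eapply r_exch; [|exact H]. apply perm_skip, Permutation_sym, Permutation_middle.
Qed.

Lemma prov_tensR_bang_prog P A B :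
  bang_prog P ⊢ A -> bang_prog P ⊢ B -> bang_prog P ⊢ Tensor A B.
Proof.
  intros HA HB. rewrite <- (app_nil_r (bang_prog P)).
  apply prov_contract_bang_prog. rewrite app_nil_r. now apply r_tensR.
Qed.

Lemma prov_lolliL_bang_prog P A B C :
  bang_prog P ⊢ A -> B :: bang_prog P ⊢ C -> Lolli A B :: bang_prog P ⊢ C.
Proof.
  intros HA HB.
  apply (r_exch (bang_prog P ++ [Lolli A B])); [apply Permutation_sym, Permutation_cons_append|].
  apply prov_contract_bang_prog. rewrite app_assoc.
  eapply r_exch; [apply Permutation_cons_append|]. now apply r_lolliL.
Qed.

Lemma ex_bchain_sound :
  (forall P G, ex P G -> bang_prog P ⊢ gtr G) /\
  (forall D P p l, bchain D P p l -> dtr D :: bang_prog P ⊢ FAtom p l).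
Proof.
  apply ex_bchain_ind; intros; simpl.
  - eapply prov_bang_prog_select; eauto.
  - now apply prov_tensR_bang_prog.
  - apply r_exR with t; auto. now rewrite <- (proj1 gtr_dtr_open).
  - now apply r_lolliR.
  - eapply r_exch; [apply Permutation_sym, Permutation_cons_append|].
    apply prov_weaken_app, r_id.
  - now apply prov_lolliL_bang_prog.
  - apply r_allL with t; auto. now rewrite <- (proj2 gtr_dtr_open).
  - apply r_tensL, (r_exch _ _ _ (perm_swap _ _ _)), r_weak; auto.
  - apply r_tensL, r_weak; auto.
  - now apply r_withL1.
  - now apply r_withL2.
Qed.

Definition resolves (P : list prog) (D : prog) : Prop :=
  forall P', incl P P' -> forall p l, bchain D P' p l -> ex P' (GAtom p l).

Definition usable (P : list prog) (F : formula) : Prop :=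
  exists D, resolves P D /\ (F = dtr D \/ F = Bang (dtr D)).

Lemma resolves_In P D : In D P -> resolves P D.
Proof. intros HD P' HP p l Hb. econstructor; eauto. Qed.

Lemma resolves_incl P P' D : incl P P' -> resolves P D -> resolves P' D.
Proof. intros HP HD P'' HP'. apply HD. eapply incl_tran; eauto. Qed.

Lemma resolves_bchain_sub P D D' :
  (forall P' p l, bchain D' P' p l -> bchain D P' p l) -> resolves P D -> resolves P D'.
Proof. intros Hsub HD P' HP p l Hb. auto. Qed.

Lemma usable_incl P P' F : incl P P' -> usable P F -> usable P' F.
Proof. intros HP [D [HD HF]]. exists D. eauto using resolves_incl. Qed.

Lemma usable_dtr P D : resolves P D -> usable P (dtr D).
Proof. exists D; auto. Qed.

Lemma usable_bang P A : usable P (Bang A) -> usable P A.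
Proof.
  intros [D [HD [E|E]]]; [destruct D; discriminate|].
  injection E as ->. now apply usable_dtr.
Qed.

Ltac usable_inv H :=
  let D := fresh "D" in let HD := fresh "HD" in let E := fresh "E" in
  destruct H as [D [HD [E|E]]]; [|discriminate]; destruct D; try discriminate;
  simpl in E; injection E; intros; subst.

Lemma usable_tensor P A B : usable P (Tensor A B) -> usable P A /\ usable P B.
Proof.
  intros H. usable_inv H.
  split; apply usable_dtr; (eapply resolves_bchain_sub; [|exact HD]; eauto using bchain).
Qed.

Lemma usable_with P A B : usable P (With A B) -> usable P A /\ usable P B.
Proof.
  intros H. usable_inv H.
  split; apply usable_dtr; (eapply resolves_bchain_sub; [|exact HD]; eauto using bchain).
Qed.

Lemma usable_all P A t : term_lc t -> usable P (FAll A) -> usable P (fopen 0 t A).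
Proof.
  intros Ht H. usable_inv H. rewrite <- (proj2 gtr_dtr_open).
  apply usable_dtr. (eapply resolves_bchain_sub; [|exact HD]; eauto using bchain).
Qed.

Lemma usable_lolli P A B :
  usable P (Lolli A B) -> exists G, A = gtr G /\ (ex P G -> usable P B).
Proof.
  intros H. usable_inv H. exists g. split; auto.
  intros Hg. apply usable_dtr. intros P' HP p l Hb.
  apply HD; auto. constructor; auto. eapply (proj1 ex_bchain_incl); eauto.
Qed.

Lemma usable_not_ex P A : ~ usable P (FEx A).
Proof. intros [D [_ [E|E]]]; destruct D; discriminate. Qed.

Lemma resolves_goal P G D : resolves P D -> dtr D = gtr G -> ex P G.
Proof.
  revert P D. induction G; intros P D HD E; destruct D; simpl in E; try discriminate.
  - injection E as -> ->. apply (HD P (incl_refl _)). constructor.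
  - injection E as E1 E2. constructor.
    + eapply IHG1, E1. (eapply resolves_bchain_sub; [|exact HD]; eauto using bchain).
    + eapply IHG2, E2. (eapply resolves_bchain_sub; [|exact HD]; eauto using bchain).
  - injection E as E. destruct g; discriminate.
Qed.

Lemma usable_goal P G : usable P (gtr G) -> ex P G.
Proof.
  intros [D [HD [E|E]]]; [eapply resolves_goal; eauto | destruct G; discriminate].
Qed.

Lemma prov_usable_complete Γ C : Γ ⊢ C ->
  forall P G, C = gtr G -> Forall (usable P) Γ -> ex P G.
Proof.
  induction 1; intros P G0 HC HF;
    try (apply Forall_cons_iff in HF as [HA HΓ]).
  - subst. now apply usable_goal.
  - apply IHprov; auto. eapply Permutation_Forall; [apply Permutation_sym, H | exact HF].
  - eauto.
  - apply IHprov; auto.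
  - apply IHprov; auto using usable_bang.
  - destruct G0; discriminate.
  - apply usable_tensor in HA as [HA HB]. auto.
  - destruct G0; try discriminate. injection HC as -> ->.
    apply Forall_app in HF as [HΓ HΔ]. constructor; eauto.
  - apply usable_with in HA as [HA _]. auto.
  - apply usable_with in HA as [_ HB]. auto.
  - destruct G0; discriminate.
  - apply Forall_app in HΓ as [HΓ HΔ].
    apply usable_lolli in HA as [G [-> HB]]. eauto.
  - destruct G0; try discriminate. injection HC as -> ->.
    constructor. apply IHprov; auto. constructor.
    + exists p. split; auto. apply resolves_In. now left.
    + eapply Forall_impl; [|exact HF]. intros F. apply usable_incl, incl_tl, incl_refl.
  - apply IHprov; auto using usable_all.
  - destruct G0; discriminate.
  - now apply usable_not_ex in HA.
  - destruct G0; try discriminate. injection HC as ->.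
    apply ex_ex with t; auto. apply IHprov; auto. symmetry; apply (proj1 gtr_dtr_open).
Qed.

Theorem mainTheorem1 (Ds : list prog) (G : goal) :
  Forall prog_lc Ds -> goal_lc G ->
  (ex Ds G <-> prov (map (fun D => Bang (dtr D)) Ds) (gtr G)).
Proof.
  intros _ _. split.
  - apply (proj1 ex_bchain_sound).
  - intros H. eapply prov_usable_complete; eauto.
    apply Forall_forall. intros F HF. apply in_map_iff in HF as [D [<- HD]].
    exists D. split; auto using resolves_In.
Qed.
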